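(* Let $(w_t)_{t\in\mathbb{N}_0}$ be mutually independent $\mathbb{R}^d$-valued random vectors with $\mathsf{E}[w_t]=0$, $\mathsf{E}[w_tw_t^{\mathrm T}]=Q_t$, and $\mathsf{E}[\|w_t\|^4]\le C_4$ for all $t$, for some $C_4>0$. Let $C_1:=\sup_t\mathsf{E}[\|w_t\|]$. Fix $r>C_1$ and $x\in\mathbb{R}^d$, and consider the closed-loop random walk $$x_{t+1}=x_t-\operatorname{sat}_r(x_t)+w_t,\qquad x_0=x,$$ with natural filtration $(\mathfrak{F}_t)_{t\in\mathbb{N}_0}$, and set $\xi_t:=\|x_t\|$. Then there exist constants $b>0$ and $J<\infty$ such that for all $t$, $$\mathsf{E}[\xi_{t+1}-\xi_t\mid\mathfrak{F}_t]\le -b\quad\text{on the event }\{\xi_t>J\}.$$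
   Context: For $r>0$, $\operatorname{sat}_r:\mathbb{R}^d\to\{y:\|y\|\le r\}$ is defined by $\operatorname{sat}_r(y)=y$ if $\|y\|\le r$ and $\operatorname{sat}_r(y)=ry/\|y\|$ otherwise (radial, not componentwise, saturation). $\|\cdot\|$ is the Euclidean norm. *)

From HB Require Import structures.
From mathcomp Require Import all_boot all_order all_algebra.
From mathcomp Require Import all_classical all_reals all_analysis.
Set Implicit Arguments. Unset Strict Implicit. Unset Printing Implicit Defensive.
Import Order.TTheory GRing.Theory Num.Theory.
Local Open Scope classical_set_scope.
Local Open Scope ring_scope.

Definition enorm {R : realType} {d : nat} (v : 'rV[R]_d) : R :=
  Num.sqrt (\sum_(i < d) (v 0 i) ^+ 2).

Definition sat {R : realType} {d : nat} (r : R) (y : 'rV[R]_d) : 'rV[R]_d :=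
  if enorm y <= r then y else (r / enorm y) *: y.

Fixpoint walk {T : Type} {R : realType} {d : nat} (r : R) (x : 'rV[R]_d)
  (w : nat -> T -> 'rV[R]_d) (t : nat) : T -> 'rV[R]_d :=
  match t with
  | 0%N => fun _ => x
  | t'.+1 => fun om => walk r x w t' om - sat r (walk r x w t' om) + w t' om
  end.

Definition rvec_measurable {dT} {T : measurableType dT} {R : realType} {d : nat}
  (X : T -> 'rV[R]_d) : Prop :=
  forall i : 'I_d, measurable_fun setT (fun om => X om 0 i).

(* sigma-algebra generated by the random vectors X s, s in S
   (the Borel sigma-algebra of R^d is generated by the coordinate maps) *)
Definition gen_sigma {dT} {T : measurableType dT} {R : realType} {d : nat}
  (S : set nat) (X : nat -> T -> 'rV[R]_d) : set (set T) :=
  <<s [set A | exists s (i : 'I_d) (B : set R),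
          S s /\ measurable B /\ A = (fun om => X s om 0 i) @^-1` B] >>.

Definition nat_filtration {dT} {T : measurableType dT} {R : realType} {d : nat}
  (X : nat -> T -> 'rV[R]_d) (t : nat) : set (set T) :=
  gen_sigma [set s | (s <= t)%N] X.

Definition mutually_independent {dT} {T : measurableType dT} {R : realType}
  {d : nat} (P : probability T R) (X : nat -> T -> 'rV[R]_d) : Prop :=
  forall (S : seq nat) (A : nat -> set T), uniq S ->
    (forall t, t \in S -> gen_sigma [set t] X (A t)) ->
    P (\bigcap_(t in [set t | t \in S]) A t) = (\prod_(t <- S) P (A t))%E.

Definition is_cond_exp {dT} {T : measurableType dT} {R : realType}
  (P : probability T R) (G : set (set T)) (X Z : T -> R) : Prop :=
  (forall B : set R, measurable B -> G (Z @^-1` B)) /\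
  P.-integrable setT (EFin \o Z) /\
  forall A, G A -> (\int[P]_(om in A) (Z om)%:E = \int[P]_(om in A) (X om)%:E)%E.

From HB Require Import structures.
From mathcomp Require Import all_boot all_order all_algebra.
From mathcomp Require Import all_classical all_reals all_analysis.
From mathcomp Require Import ring lra.
Import measurable_realfun.
Import Order.TTheory GRing.Theory Num.Theory.
Local Open Scope classical_set_scope.
Local Open Scope ring_scope.

(* Let c := sup_t E||w_t|| < r.  Outside the ball of radius r the saturation
   removes exactly length r, so xi_(t+1) <= xi_t - r + ||w_t|| there.  The
   event algebra F_t is contained in sigma(w_0, ..., w_(t-1)), which is
   independent of w_t by a pi-lambda argument, so integrating over an
   F_t-event A inside {xi_t > r} gives  int_A (xi_(t+1) - xi_t) <= (c - r) P(A).
   A version Z of the conditional drift must then satisfy Z <= -(r - c)/2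
   almost surely on {xi_t > r}: the F_t-event where this fails would violate
   the bound.  Hence b = (r - c)/2 and J = r. *)

Section euclidean_norm.
Context {R : realType} {d : nat}.
Implicit Types u v : 'rV[R]_d.

Lemma enorm_ge0 v : 0 <= enorm v.
Proof. exact: sqrtr_ge0. Qed.

Lemma enorm_sqr v : enorm v ^+ 2 = \sum_(i < d) (v 0 i) ^+ 2.
Proof. by rewrite /enorm sqr_sqrtr // sumr_ge0 // => i _; exact: sqr_ge0. Qed.

Lemma enormZ (a : R) v : enorm (a *: v) = `|a| * enorm v.
Proof.
rewrite /enorm (eq_bigr (fun i => a ^+ 2 * (v 0 i) ^+ 2)); last first.
  by move=> i _; rewrite mxE exprMn.
by rewrite -mulr_sumr sqrtrM ?sqr_ge0 // sqrtr_sqr.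
Qed.

Lemma enorm0 : enorm (0 : 'rV[R]_d) = 0.
Proof. by rewrite -(scale0r (0 : 'rV[R]_d)) enormZ normr0 mul0r. Qed.

Lemma enorm_eq0_coord v i : enorm v = 0 -> v 0 i = 0.
Proof.
move=> v0; have : \sum_(j < d) (v 0 j) ^+ 2 = 0 by rewrite -enorm_sqr v0 expr0n.
move/eqP; rewrite psumr_eq0; last by move=> j _; exact: sqr_ge0.
by move/allP => /(_ i (mem_index_enum _)) /=; rewrite sqrf_eq0 => /eqP.
Qed.

Lemma cauchy_schwarz u v : \sum_(i < d) u 0 i * v 0 i <= enorm u * enorm v.
Proof.
set a := enorm u; set b := enorm v.
have [a0|a0] := eqVneq a 0.
  by rewrite a0 mul0r big1 // => i _; rewrite (enorm_eq0_coord _ _ a0) mul0r.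
have [b0|b0] := eqVneq b 0.
  by rewrite b0 mulr0 big1 // => i _; rewrite (enorm_eq0_coord _ _ b0) mulr0.
have ab_gt0 : 0 < 2 * (a * b).
  by rewrite !mulr_gt0 // lt0r ?a0 ?b0 enorm_ge0.
rewrite -(ler_pM2l ab_gt0).
(* expand the nonnegative sum of the squares (b u_i - a v_i)^2 *)
have -> : 2 * (a * b) * (a * b) = \sum_(i < d) ((b * u 0 i) ^+ 2 + (a * v 0 i) ^+ 2).
  rewrite big_split /=; under eq_bigr do rewrite exprMn.
  under [X in _ = _ + X]eq_bigr do rewrite exprMn.
  by rewrite -!mulr_sumr -!enorm_sqr -/a -/b; ring.
rewrite mulr_sumr; apply: ler_sum => i _.
have := sqr_ge0 (b * u 0 i - a * v 0 i); nra.
Qed.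

Lemma ler_enormD u v : enorm (u + v) <= enorm u + enorm v.
Proof.
rewrite -(ler_pXn2r (isT : (0 < 2)%N)) ?nnegrE ?addr_ge0 ?enorm_ge0 //.
rewrite enorm_sqr (eq_bigr (fun i => (u 0 i) ^+ 2 + (v 0 i) ^+ 2 + 2 * (u 0 i * v 0 i)));
  last by move=> i _; rewrite mxE; ring.
rewrite !big_split /= -mulr_sumr -!enorm_sqr.
have := cauchy_schwarz u v; nra.
Qed.

End euclidean_norm.

Section saturation.
Context {R : realType} {d : nat} (r : R).
Hypothesis r_ge0 : 0 <= r.
Implicit Types y v : 'rV[R]_d.

Lemma enorm_sub_sat_gt y : r < enorm y -> enorm (y - sat r y) = enorm y - r.
Proof.
move=> ry; have y_gt0 : 0 < enorm y by exact: le_lt_trans ry.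
rewrite /sat leNgt ry /= -{1}(scale1r y) -scalerBl enormZ ger0_norm.
  by rewrite mulrBl mul1r mulfVK // gt_eqF.
by rewrite subr_ge0 ler_pdivrMr // mul1r ltW.
Qed.

Lemma enorm_sub_sat_le y : enorm (y - sat r y) <= enorm y.
Proof.
have [yr|ry] := leP (enorm y) r; first by rewrite /sat yr subrr enorm0 enorm_ge0.
by rewrite enorm_sub_sat_gt // lerBlDr lerDl.
Qed.

Lemma enorm_step_le y v : enorm (y - sat r y + v) <= enorm y + enorm v.
Proof. by apply: le_trans (ler_enormD _ _) _; rewrite lerD2r enorm_sub_sat_le. Qed.

Lemma enorm_step_gt y v : r < enorm y ->
  enorm (y - sat r y + v) <= enorm y - r + enorm v.
Proof. by move=> ry; rewrite -enorm_sub_sat_gt //; exact: ler_enormD. Qed.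

End saturation.

Lemma measurable_inv (R : realType) : measurable_fun setT (@GRing.inv R).
Proof.
have -> : [set: R] = ~` [set 0] `|` [set 0] by rewrite setvU.
apply/measurable_funU.
- exact: measurableC (measurable_set1 _).
- exact: measurable_set1.
split; last exact: measurable_fun_set1.
apply: open_continuous_measurable_fun.
  exact/closed_openC/accessible_closed_set1/hausdorff_accessible.
by move=> x /set_mem /eqP x0; exact: inv_continuous.
Qed.

Section rvec_measurability.
Context {dT} {T : measurableType dT} {R : realType} {d : nat}.
Implicit Types y z : T -> 'rV[R]_d.

Lemma measurable_enorm y :
  rvec_measurable y -> measurable_fun setT (fun om => enorm (y om)).
Proof.
move=> my; apply: measurableT_comp (continuous_measurable_fun (@sqrt_continuous R)) _.
by apply: measurable_sum => i; exact/measurable_funX/my.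
Qed.

Lemma rvec_measurable_sat (r : R) y :
  rvec_measurable y -> rvec_measurable (fun om => sat r (y om)).
Proof.
move=> my i; rewrite /sat.
have -> : (fun om => (if enorm (y om) <= r then y om else (r / enorm (y om)) *: y om) 0 i)
   = (fun om => if enorm (y om) <= r then y om 0 i else r * (enorm (y om))^-1 * y om 0 i).
  by apply/funext => om; case: ifP; rewrite ?mxE.
apply: measurable_fun_ifT; first exact/measurable_fun_ler/measurable_cst/measurable_enorm.
  exact: my.
apply/measurable_funM/my/measurable_funM/measurableT_comp/measurable_enorm => //.
exact: measurable_inv.
Qed.

Lemma rvec_measurable_step (r : R) y z : rvec_measurable y -> rvec_measurable z ->
  rvec_measurable (fun om => y om - sat r (y om) + z om).
Proof.
move=> my mz i.
have -> : (fun om => (y om - sat r (y om) + z om) 0 i)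
  = (fun om => y om 0 i - sat r (y om) 0 i + z om 0 i).
  by apply/funext => om; rewrite !mxE.
by apply/measurable_funD/mz/measurable_funB/rvec_measurable_sat.
Qed.

Lemma rvec_measurable_walk (r : R) x (w : nat -> T -> 'rV[R]_d) t :
  (forall s, (s < t)%N -> rvec_measurable (w s)) ->
  forall s, (s <= t)%N -> rvec_measurable (walk r x w s).
Proof.
move=> mw; elim=> [_ i|s IHs st /=]; first exact: measurable_cst.
by apply: rvec_measurable_step; [exact/IHs/ltnW | exact: mw].
Qed.

End rvec_measurability.

Definition coord_preimages {dT} {T : measurableType dT} {R : realType} {d : nat}
    (S : set nat) (X : nat -> T -> 'rV[R]_d) : set (set T) :=
  [set A | exists s (i : 'I_d) (B : set R),
     S s /\ measurable B /\ A = (fun om => X s om 0 i) @^-1` B].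

Section coordinate_sigma_algebras.
Context {dT} {T : measurableType dT} {R : realType} {d : nat}.
Context {X : nat -> T -> 'rV[R]_d}.

Local Notation gen_type S := (g_sigma_algebraType (coord_preimages S X)).

Lemma rvec_measurable_gen {S s} : S s -> @rvec_measurable _ (gen_type S) R d (X s).
Proof.
by move=> Ss i _ B mB; rewrite setTI; apply: sub_sigma_algebra; exists s, i, B.
Qed.

Lemma gen_sigmaT S : gen_sigma S X setT.
Proof. exact: (@measurableT _ (gen_type S)). Qed.

Lemma gen_sigma_setI_closed S : setI_closed (gen_sigma S X).
Proof. exact: (@measurableI _ (gen_type S)). Qed.

Lemma gen_sigma_enorm_preimage S s B : S s -> measurable B ->
  gen_sigma S X ((fun om => enorm (X s om)) @^-1` B).
Proof.
move=> Ss mB; have := measurable_enorm _ (rvec_measurable_gen Ss) measurableT _ mB.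
by rewrite setTI.
Qed.

Hypothesis mX : forall s, rvec_measurable (X s).

Lemma coord_preimages_measurable S : coord_preimages S X `<=` measurable.
Proof.
by move=> _ [s [i [B [_ [mB ->]]]]]; rewrite -(setTI (_ @^-1` _)); exact: mX.
Qed.

Lemma gen_sigma_measurable S : gen_sigma S X `<=` measurable.
Proof.
exact: smallest_sub (@sigma_algebra_measurable _ T) (@coord_preimages_measurable S).
Qed.

End coordinate_sigma_algebras.

Section independence_extension.
Context {dT} {T : measurableType dT} {R : realType} (P : probability T R).

Lemma indep_g_sigma {G : set (set T)} {E : set T} :
  G `<=` measurable -> setI_closed G -> G setT -> measurable E ->
  (forall A, G A -> P (A `&` E) = (P A * P E)%E) ->
  forall A, <<s G >> A -> P (A `&` E) = (P A * P E)%E.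
Proof.
move=> Gm GI GT mE indep A GA.
have PE_ge0 : (0 <= fine (P E))%R by apply: fine_ge0; exact: measure_ge0.
have PEE : P E = (fine (P E))%:E by rewrite fineK // fin_num_measure.
pose m := mscale (NngNum PE_ge0) P.
have cover : \bigcup_(n : nat) [set: T] = setT by rewrite bigcup_const.
have eqG B : G B -> mrestr P mE B = m B.
  by move=> GB; change (P (B `&` E) = (fine (P E))%:E * P B)%E; rewrite -PEE muleC indep.
have finT (n : nat) : (mrestr P mE setT < +oo)%E.
  by rewrite /= /mrestr setTI (le_lt_trans (probability_le1 P mE)) ?ltry.
have := g_sigma_algebra_measure_unique G Gm (fun _ => setT) (fun _ => GT) cover
  (mrestr P mE) m GI eqG finT A GA.
move=> eqA; change (P (A `&` E) = (fine (P E))%:E * P A)%E in eqA.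
by rewrite eqA muleC -PEE.
Qed.

Lemma ge0_integral_mrestr (mu : {measure set T -> \bar R}) (A : set T)
    (mA : measurable A) (f : T -> \bar R) :
  measurable_fun setT f -> (forall om, (0 <= f om)%E) ->
  (\int[mu]_(om in A) f om = \int[mrestr mu mA]_om f om)%E.
Proof.
move=> mf f0; rewrite -(setUv A) ge0_integral_setU //; last 3 first.
- exact: measurableC.
- by rewrite setUv.
- by rewrite disj_set2E setICr.
rewrite [X in (_ + X)%E]null_set_integral ?adde0.
- by apply: eq_measure_integral => S mS SA; rewrite /= /mrestr setIidl.
- exact: measurableC.
- exact: measurable_funS mf.
- by rewrite /= /mrestr setICl measure0.
Qed.

Lemma integral_indep (A : set T) (n : T -> R) : measurable A ->
  measurable_fun setT n -> (forall om, 0 <= n om) ->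
  (forall B, measurable B -> P (n @^-1` B `&` A) = (P A * P (n @^-1` B))%E) ->
  (\int[P]_(om in A) (n om)%:E = P A * \int[P]_om (n om)%:E)%E.
Proof.
move=> mA mn n0 indep.
have PA_ge0 : 0 <= fine (P A) by apply: fine_ge0; exact: measure_ge0.
have PAE : P A = (fine (P A))%:E by rewrite fineK // fin_num_measure.
pose nf : {mfun T >-> R} := HB.pack n (isMeasurableFun.Build _ _ _ _ _ mn).
pose f (y : R) : \bar R := (`|y|)%:E.
have mf : measurable_fun setT f by apply/measurable_EFinP; exact: normr_measurable.
have f0 : {in setT, forall y, (0 <= f y)%E} by move=> y _; rewrite lee_fin.
have push (mu : {measure set T -> \bar R}) :
    (\int[pushforward mu n]_y f y = \int[mu]_om (n om)%:E)%E.
  rewrite ge0_integral_pushforward // preimage_setT.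
  by apply: eq_integral => om _; rewrite /f /= ger0_norm.
rewrite (ge0_integral_mrestr _ _ mA); last 2 first.
- exact/measurable_EFinP.
- by move=> om; rewrite lee_fin.
(* by independence, the law of [n] under [P] restricted to [A] is [P A] times its law *)
rewrite -push (eq_measure_integral (mscale (NngNum PA_ge0) (distribution P nf))).
  rewrite ge0_integral_mscale //=; last by move=> y _; rewrite lee_fin.
  by rewrite [in RHS]PAE -push.
move=> B mB _.
by change (P (n @^-1` B `&` A) = (fine (P A))%:E * P (n @^-1` B))%E; rewrite -PAE indep.
Qed.

End independence_extension.

Section independence_of_the_past.
Context {dT} {T : measurableType dT} {R : realType} {d : nat} (P : probability T R).
Variable w : nat -> T -> 'rV[R]_d.
Hypothesis mw : forall t, rvec_measurable (w t).
Hypothesis indep : mutually_independent P w.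

Local Notation before t := [set s | (s < t)%N].

Lemma prob_bigcap_before {n} {A : nat -> set T} :
  (forall s, (s < n)%N -> gen_sigma [set s] w (A s)) ->
  P (\bigcap_(s in before n) A s) = (\prod_(0 <= s < n) P (A s))%E.
Proof.
move=> wA; have -> : before n = [set s | s \in iota 0 n].
  by apply/seteqP; split => s /=; rewrite mem_iota.
rewrite /index_iota subn0; apply: indep (iota_uniq 0 n) _ => s.
by rewrite mem_iota; exact: wA.
Qed.

(* a pi-system generating sigma(w_0, ..., w_(t-1)) *)
Definition past_events t : set (set T) := [set A | exists As : nat -> set T,
  (forall s, (s < t)%N -> gen_sigma [set s] w (As s)) /\
  A = \bigcap_(s in before t) As s].

Lemma past_eventsT t : past_events t setT.
Proof.
exists (fun _ => setT); split => [s _|]; first exact: gen_sigmaT.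
by apply/seteqP; split.
Qed.

Lemma past_events_setI_closed t : setI_closed (past_events t).
Proof.
move=> _ _ [As [wA ->]] [Bs [wB ->]].
exists (fun s => As s `&` Bs s); split.
  by move=> s st; exact: gen_sigma_setI_closed (wA s st) (wB s st).
by rewrite bigcapI.
Qed.

Lemma past_events_measurable t : past_events t `<=` measurable.
Proof.
move=> _ [As [wA ->]]; apply: bigcap_measurableType => s st.
exact: gen_sigma_measurable (wA s st).
Qed.

Lemma past_events_indep t A E : past_events t A -> gen_sigma [set t] w E ->
  P (A `&` E) = (P A * P E)%E.
Proof.
move=> [As [wA ->]] wE.
pose Bs s := if s == t then E else As s.
have wB s : (s < t.+1)%N -> gen_sigma [set s] w (Bs s).
  rewrite ltnS leq_eqVlt /Bs => /orP[/eqP ->|st]; first by rewrite eqxx.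
  by rewrite ltn_eqF //; exact: wA.
have AsBs : \bigcap_(s in before t) As s = \bigcap_(s in before t) Bs s.
  by apply: eq_bigcapr => s /= st; rewrite /Bs ltn_eqF.
have -> : (\bigcap_(s in before t) As s) `&` E = \bigcap_(s in before t.+1) Bs s.
  apply/seteqP; split => [om [Aom Eom] s|om Bom].
    rewrite /= ltnS leq_eqVlt => /orP[/eqP ->|st]; first by rewrite /Bs eqxx.
    by rewrite /Bs ltn_eqF //; exact: Aom.
  split; first by move=> s st; have := Bom s (ltnW st); rewrite /Bs ltn_eqF.
  by have := Bom t (ltnSn t); rewrite /Bs eqxx.
have wBt s : (s < t)%N -> gen_sigma [set s] w (Bs s) by move/ltnW; exact: wB.
rewrite AsBs (prob_bigcap_before wB) (prob_bigcap_before wBt).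
by rewrite big_nat_recr //= {2}/Bs eqxx.
Qed.

Lemma g_sigma_past_indep t A E : <<s past_events t >> A -> gen_sigma [set t] w E ->
  P (A `&` E) = (P A * P E)%E.
Proof.
move=> pA wE; apply: (indep_g_sigma P (@past_events_measurable t)
  (@past_events_setI_closed t) (past_eventsT t) (gen_sigma_measurable mw _ _ wE) _ A pA).
by move=> B pB; exact: (past_events_indep _ _ _ pB wE).
Qed.

Lemma rvec_measurable_past t s : (s < t)%N ->
  @rvec_measurable _ (g_sigma_algebraType (past_events t)) R d (w s).
Proof.
move=> st i _ B mB; apply: sub_sigma_algebra.
exists (fun s' => if s' == s then (fun om => w s om 0 i) @^-1` B else setT); split.
  move=> s' _; case: eqP => [->|_]; last exact: gen_sigmaT.
  by apply: sub_sigma_algebra; exists s, i, B.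
apply/seteqP; split => [om [_ wom] s' _|om wom]; first by case: eqP => // ->.
by split => //; have := wom s st; rewrite eqxx.
Qed.

Lemma nat_filtration_walk_sub_past (r : R) x t :
  nat_filtration (walk r x w) t `<=` <<s past_events t >>.
Proof.
apply: smallest_sub; first exact: smallest_sigma_algebra.
move=> _ [s [i [B [st [mB ->]]]]].
have := rvec_measurable_walk r x _ _ (@rvec_measurable_past t) _ st i measurableT _ mB.
by rewrite setTI.
Qed.

Variables (r : R) (x : 'rV[R]_d).
Hypothesis r_ge0 : 0 <= r.
Hypothesis integrable_w : forall s, P.-integrable setT (fun om => (enorm (w s om))%:E).

Local Notation xi s := (fun om => enorm (walk r x w s om)).

Lemma rvec_measurable_walkT s : rvec_measurable (walk r x w s).
Proof. by apply: (rvec_measurable_walk _ _ _ s) => // s' _; exact: mw. Qed.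

Lemma integrable_enorm_walk s : P.-integrable setT (fun om => (xi s om)%:E).
Proof.
elim: s => [|s IHs]; first exact: (@finite_measure_integrable_cst _ _ _ P setT (enorm x) measurableT).
apply: (le_integrable measurableT _ _ (integrableD measurableT IHs (integrable_w s))).
  exact/measurable_EFinP/measurable_enorm/rvec_measurable_walkT.
move=> om _ /=; rewrite lee_fin !ger0_norm ?addr_ge0 ?enorm_ge0 //.
exact: enorm_step_le.
Qed.

Lemma integral_enorm_noise t A : nat_filtration (walk r x w) t A ->
  (\int[P]_(om in A) (enorm (w t om))%:E = P A * \int[P]_om (enorm (w t om))%:E)%E.
Proof.
move=> FA; apply: integral_indep.
- exact: gen_sigma_measurable rvec_measurable_walkT _ _ FA.
- exact/measurable_enorm/mw.
- by move=> om; exact: enorm_ge0.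
move=> B mB; rewrite setIC; apply: g_sigma_past_indep.
  exact: nat_filtration_walk_sub_past FA.
exact: gen_sigma_enorm_preimage.
Qed.

Lemma walk_drift_integral t A : nat_filtration (walk r x w) t A ->
  A `<=` [set om | r < xi t om] ->
  (\int[P]_(om in A) (xi t.+1 om - xi t om)%:E
     <= P A * \int[P]_om (enorm (w t om))%:E - r%:E * P A)%E.
Proof.
move=> FA Ar; have mA := gen_sigma_measurable rvec_measurable_walkT _ _ FA.
have int_wA := integrableS measurableT mA (subsetT A) (integrable_w t).
have int_rA := finite_measure_integrable_cst P r mA.
rewrite -integral_enorm_noise // -integral_cst // -integralB //.
apply: le_integral => //.
- apply: integrableS (subsetT A) _ => //; rewrite (_ : (fun om => _) =
    (fun om => (xi t.+1 om)%:E - (xi t om)%:E)%E); last by apply/funext => om; rewrite EFinB.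
  exact: integrableB (integrable_enorm_walk _) (integrable_enorm_walk _).
- exact: integrableB.
- move=> om /set_mem /Ar rxi; rewrite /= -EFinB lee_fin.
  by have := enorm_step_gt _ r_ge0 _ (w t om) rxi; rewrite /=; lra.
Qed.

End independence_of_the_past.

Lemma cond_exp_ae_le {dT} {T : measurableType dT} {R : realType}
    (P : probability T R) (G : set (set T)) (X Z : T -> R) (E : set T) (k k' : R) :
  G `<=` measurable -> setI_closed G -> G E -> k < k' -> is_cond_exp P G X Z ->
  (forall A, G A -> A `<=` E -> (\int[P]_(om in A) (X om)%:E <= k%:E * P A)%E) ->
  {ae P, forall om, E om -> Z om <= k'}.
Proof.
move=> Gm GI GE kk' [mZ [intZ eqZ]] boundX.
pose A := E `&` Z @^-1` `]k', +oo[.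
have GA : G A by apply: GI GE (mZ _ (measurable_itv _)).
have mA := Gm _ GA.
exists A; split => //; last first.
  move=> om /= /not_implyP [Eom /negP]; rewrite -ltNge => Zom.
  by split => //=; rewrite in_itv /= andbT.
have PAE : P A = (fine (P A))%:E by rewrite fineK // fin_num_measure.
have p_ge0 : 0 <= fine (P A) by apply: fine_ge0; exact: measure_ge0.
have lowerZ : (k'%:E * P A <= \int[P]_(om in A) (Z om)%:E)%E.
  rewrite -integral_cst //; apply: le_integral => //.
  - exact: finite_measure_integrable_cst.
  - exact: integrableS (subsetT A) intZ.
  - by move=> om /set_mem [_]; rewrite /= in_itv /= andbT lee_fin => /ltW.
have := boundX A GA (@subIsetl _ _ _); rewrite -eqZ // => /(le_trans lowerZ).
rewrite PAE -!EFinM lee_fin => ineq.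
by apply/eqP; rewrite PAE eqe; nra.
Qed.

Theorem lemma2 (dT : measure_display) (T : measurableType dT) (R : realType)
  (P : probability T R) (d : nat)
  (w : nat -> T -> 'rV[R]_d) (Q : nat -> 'M[R]_d) (C4 : R)
  (r : R) (x : 'rV[R]_d) :
  (forall t, rvec_measurable (w t)) ->
  mutually_independent P w ->
  (forall t (i : 'I_d), ('E_P[fun om => w t om ord0 i] = 0)%E) ->
  (forall t (i j : 'I_d),
     ('E_P[fun om => (w t om ord0 i * w t om ord0 j)%R] = (Q t i j)%:E)%E) ->
  0 < C4 ->
  (forall t, 'E_P[fun om => (enorm (w t om) ^+ 4)%R] <= C4%:E)%E ->
  (ereal_sup [set 'E_P[fun om => enorm (w t om)] | t in [set: nat]] < r%:E)%E ->
  exists b J : R, 0 < b /\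
    forall (t : nat) (Z : T -> R),
      is_cond_exp P (nat_filtration (walk r x w) t)
        (fun om => enorm (walk r x w t.+1 om) - enorm (walk r x w t om)) Z ->
      {ae P, forall om, J < enorm (walk r x w t om) -> Z om <= - b}.
Proof.
move=> mw indep _ _ _ _ sup_lt_r.
set S := [set _ | _ in _] in sup_lt_r.
have E_ge0 t : (0 <= \int[P]_om (enorm (w t om))%:E)%E.
  by apply: integral_ge0 => om _; rewrite lee_fin enorm_ge0.
have E_le_sup t : (\int[P]_om (enorm (w t om))%:E <= ereal_sup S)%E.
  have : ('E_P[fun om => enorm (w t om)] <= ereal_sup S)%E.
    by apply: ereal_sup_ubound; exists t.
  by rewrite unlock.
have sup_fin : ereal_sup S \is a fin_num.
  by rewrite ge0_fin_numE ?(le_trans (E_ge0 0%N)) // (lt_le_trans sup_lt_r) ?leey.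
pose c := fine (ereal_sup S).
have E_le_c t : (\int[P]_om (enorm (w t om))%:E <= c%:E)%E by rewrite fineK.
have c_ge0 : 0 <= c by rewrite -lee_fin (le_trans (E_ge0 0%N)).
have c_lt_r : c < r by rewrite -lte_fin fineK.
have int_w t : P.-integrable setT (fun om => (enorm (w t om))%:E).
  apply/integrableP; split; first exact/measurable_EFinP/measurable_enorm/mw.
  under eq_integral do rewrite gee0_abs ?lee_fin ?enorm_ge0 //.
  exact: le_lt_trans (E_le_c t) (ltry c).
exists ((r - c) / 2), r; split => [|t Z condZ]; first by rewrite divr_gt0 // subr_gt0.
have r_ge0 : 0 <= r by lra.
apply: (cond_exp_ae_le _ _ _ _ _ (c - r) _ _ (@gen_sigma_setI_closed _ _ _ _ _ _) _ _ condZ).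
- exact: (gen_sigma_measurable (rvec_measurable_walkT w mw r x) [set s | (s <= t)%N]).
- have := @gen_sigma_enorm_preimage _ _ _ _ (walk r x w) [set s | (s <= t)%N] t _ (leqnn t)
    (measurable_itv `]r, +oo[).
  by rewrite preimage_itvoy.
- lra.
move=> A FA Ar; apply: le_trans (walk_drift_integral _ _ mw indep _ _ r_ge0 int_w _ _ FA Ar) _.
have PAE : P A = (fine (P A))%:E by rewrite fineK // fin_num_measure //;
  exact: gen_sigma_measurable (rvec_measurable_walkT _ mw r x) _ _ FA.
have p_ge0 : 0 <= fine (P A) by apply: fine_ge0; exact: measure_ge0.
have I_fin : (\int[P]_om (enorm (w t om))%:E)%E \is a fin_num.
  by rewrite ge0_fin_numE // (le_lt_trans (E_le_c t)) ?ltry.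
have := E_le_c t; rewrite -(fineK I_fin) PAE -!EFinM -EFinB !lee_fin.
by move=> e_le_c; nra.
Qed.
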